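(* Let $X$ be a topological space and $x \in X$, and suppose player II has a winning strategy $F$ in the game $\mathsf{G}_1(\Omega_x, \Omega_x)$. Let $\mathcal{P}$ be a family such that each element of $\mathcal{P}$ is a centered family of countable subsets of $X$, and such that for every neighborhood $O_x$ of $x$ there exist $\mathcal{B} \in \mathcal{P}$ and $B \in \mathcal{B}$ with $B \subset O_x$. Then there is a family $(\mathcal{B}_s)_{s \in \omega^{<\omega}}$ of elements of $\mathcal{P}$ such that for every choice of $B_s \in \mathcal{B}_s$ for each $s \in \omega^{<\omega}$, and for every $f \in \omega^\omega$, we have $x \in \overline{\bigcup_{s \subset f} B_s}$ (the union over all finite initial segments $s$ of $f$).
   Context: For a point $x$ of a space $X$, $\Omega_x$ denotes the collection of all sets $A \subset X$ such that $x \notin A$ and $x \in \overline{A}$. The game $\mathsf{G}_1(\Omega_x,\Omega_x)$ is played in innings $n \in \omega$: in inning $n$ player I chooses $A_n \in \Omega_x$ and then player II chooses $a_n \in A_n$; player II wins if $\{a_n : n \in \omega\} \in \Omega_x$. A strategy for player II is a function $F$ assigning to each finite nonempty sequence $(D_0,\dots,D_n)$ of elements of $\Omega_x$ a point $F(D_0,\dots,D_n) \in D_n$; it is winning if II wins every play in which she answers according to $F$. A family $\mathcal{F}$ of sets is centered if $A \cap B \neq \emptyset$ for all $A, B \in \mathcal{F}$. *)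

From mathcomp Require Import all_boot all_order.
From mathcomp Require Import all_classical.
From mathcomp Require Import topology.
Set Implicit Arguments. Unset Strict Implicit. Unset Printing Implicit Defensive.
Local Open Scope classical_set_scope.

Definition Omega_x {X : topologicalType} (x : X) : set (set X) :=
  [set A | ~ A x /\ closure A x].

(* A strategy for player II: assigns to every finite nonempty sequence
   (D_0,...,D_n) of elements of Omega_x (encoded as rcons s D) a point of D_n.
   Values on sequences not consisting of elements of Omega_x are irrelevant. *)
Definition strategy_II {X : topologicalType} (x : X) (F : seq (set X) -> X) : Prop :=
  forall (s : seq (set X)) (D : set X),
    (forall i, (i < size s)%N -> Omega_x x (nth set0 s i)) ->
    Omega_x x D -> D (F (rcons s D)).

Definition winning_strategy_II {X : topologicalType} (x : X) (F : seq (set X) -> X) : Prop :=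
  strategy_II x F /\
  forall A : nat -> set X, (forall n, Omega_x x (A n)) ->
    Omega_x x (range (fun n => F (mkseq A n.+1))).

Definition centered {X : Type} (FF : set (set X)) : Prop :=
  forall A B, FF A -> FF B -> A `&` B !=set0.

From mathcomp Require Import all_boot all_order.
From mathcomp Require Import all_classical.
From mathcomp Require Import topology.
Set Implicit Arguments. Unset Strict Implicit. Unset Printing Implicit Defensive.
Local Open Scope classical_set_scope.

(* At a legal position p, I can force II to play any point y <> x close
   enough to x: otherwise the points he cannot force form a move of I in
   Omega_x to which II has no answer.  So every position p has a member BB_p
   of P and some W_p in BB_p near x, each point of W_p other than x being
   forced by a move of I.  Enumerating the countable sets W_p and following
   these moves builds a tree of positions indexed by seq nat.  Given a set
   S_u in the family of each node u, centeredness yields a point of W_u in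
   S_u; along the branch choosing these points II answers exactly them, so
   either one of them is x or, II winning, x lies in their closure. *)

Definition legal_position {X : topologicalType} (x : X) (p : seq (set X)) :=
  forall i, (i < size p)%N -> Omega_x x (nth set0 p i).

Lemma legal_position_mkseq {X : topologicalType} (x : X) (A : nat -> set X) m :
  legal_position x (mkseq A m) <-> forall i, (i < m)%N -> Omega_x x (A i).
Proof.
rewrite /legal_position size_mkseq.
by split=> hA i lt_im; have := hA i lt_im; rewrite nth_mkseq.
Qed.

Lemma countable_range T (A : set T) :
  countable A -> A !=set0 -> exists f : nat -> T, A = range f.
Proof. by move=> /pfcard_geP[->[]//|/surjfunPex[f ->]]; exists f. Qed.

Lemma strategy_II_nbhs_answers {X : topologicalType} (x : X) F p :
  strategy_II x F -> legal_position x p ->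
  exists U, nbhs x U /\ U `\ x `<=` (fun A => F (rcons p A)) @` Omega_x x.
Proof.
move=> hF legal_p; apply: contrapT => no_U.
pose A := ~` ((fun A => F (rcons p A)) @` Omega_x x) `\ x.
have OA : Omega_x x A.
  split=> [[_ /(_ erefl)]//|B nbhs_B].
  apply: contrapT => AB0; apply: no_U; exists B; split=> // y [By yx].
  by apply: contrapT => hy; apply: AB0; exists y.
by have [+ _] := hF p A legal_p OA; apply; exists A.
Qed.

Definition tree_position {X : Type} (Ach : seq (set X) -> nat -> set X)
    (u : seq nat) : seq (set X) :=
  foldl (fun p k => rcons p (Ach p k)) [::] u.

Definition branch (k : seq nat -> nat) (m : nat) : seq nat :=
  iter m (fun u => rcons u (k u)) [::].

Section WinningTree.
Variables (X : topologicalType) (x : X) (F : seq (set X) -> X).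
Variables (a : seq (set X) -> nat -> X) (Ach : seq (set X) -> nat -> set X).
Hypothesis Ach_forces : forall p k, legal_position x p -> a p k <> x ->
  Omega_x x (Ach p k) /\ F (rcons p (Ach p k)) = a p k.

Let pos := tree_position Ach.

Lemma tree_position_branch k m :
  pos (branch k m) = mkseq (fun i => Ach (pos (branch k i)) (k (branch k i))) m.
Proof.
elim: m => [//|m IH].
by rewrite mkseqS -IH /pos /tree_position /= foldl_rcons.
Qed.

Lemma winning_tree_closure (k : seq nat -> nat) : winning_strategy_II x F ->
  closure (range (fun u => a (pos u) (k u))) x.
Proof.
move=> [_ winF].
pose A i := Ach (pos (branch k i)) (k (branch k i)).
pose c i := a (pos (branch k i)) (k (branch k i)).
have c_range i : range (fun u => a (pos u) (k u)) (c i) by exists (branch k i).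
have [[m cmx]|c_neq_x] := pselect (exists m, c m = x).
  by apply: subset_closure; rewrite -cmx.
have legal_branch i : (forall j, (j < i)%N -> Omega_x x (A j)) ->
    legal_position x (pos (branch k i)).
  by rewrite tree_position_branch => /legal_position_mkseq.
have forced i : (forall j, (j < i)%N -> Omega_x x (A j)) ->
    Omega_x x (A i) /\ F (rcons (pos (branch k i)) (A i)) = c i.
  move=> OA; apply: Ach_forces (legal_branch i OA) _ => cx.
  by apply: c_neq_x; exists i.
have OA i : Omega_x x (A i) by elim/ltn_ind: i => i /forced[].
apply: (closureS _ (winF A OA).2) => _ [i _ <-].
rewrite mkseqS -tree_position_branch (forced i (fun j _ => OA j)).2.
exact: c_range.
Qed.

End WinningTree.

Lemma tree_selection_closure (X : topologicalType) (x : X) F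
    (P : set (set (set X))) :
  winning_strategy_II x F ->
  (forall BB, P BB -> centered BB /\ (forall B, BB B -> countable B)) ->
  (forall O, nbhs x O -> exists BB, P BB /\ exists B, BB B /\ B `<=` O) ->
  exists BB : seq nat -> set (set X), (forall u, P (BB u)) /\
    forall S : seq nat -> set X, (forall u, BB u (S u)) ->
    closure (\bigcup_(u in [set: seq nat]) S u) x.
Proof.
move=> winF hP hN.
have /choice[U hU] : forall p, exists U, nbhs x U /\
    (legal_position x p -> U `\ x `<=` (fun A => F (rcons p A)) @` Omega_x x).
  move=> p; have [legal_p|] := pselect (legal_position x p); last first.
    by exists setT; split=> //; exact: filterT.
  by have [U []] := strategy_II_nbhs_answers winF.1 legal_p; exists U.
have /choice[Ba hBa] : forall p, exists Ba : set (set X) * (nat -> X),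
    P Ba.1 /\ Ba.1 (range Ba.2) /\ range Ba.2 `<=` U p.
  move=> p; have [BB [PBB [W [BBW WU]]]] := hN _ (hU p).1.
  have [centered_BB countable_BB] := hP _ PBB.
  have [w [Ww _]] := centered_BB _ _ BBW BBW.
  have [a Wa] := countable_range (countable_BB _ BBW) (ex_intro _ w Ww).
  by exists (BB, a); rewrite -Wa.
pose a p := (Ba p).2.
have /choice[Ach_pair hAch_pair] : forall pk : seq (set X) * nat, exists A,
    legal_position x pk.1 -> a pk.1 pk.2 <> x ->
    Omega_x x A /\ F (rcons pk.1 A) = a pk.1 pk.2.
  move=> [p k].
  have [legal_p|] := pselect (legal_position x p); last by exists set0.
  have [->|akx] := pselect (a p k = x); first by exists set0.
  have Uak : (U p `\ x) (a p k).
    by split=> //; exact: (hBa p).2.2 _ (imageT _ k).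
  have [A OA FA] := (hU p).2 legal_p _ Uak.
  by exists A.
pose Ach p k := Ach_pair (p, k).
exists (fun u => (Ba (tree_position Ach u)).1).
split=> [u|S hS]; first exact: (hBa _).1.
have /choice[k hk] : forall u, exists k, S u (a (tree_position Ach u) k).
  move=> u; have [PBB [BBa _]] := hBa (tree_position Ach u).
  have [y [Sy [k _ aky]]] := (hP _ PBB).1 _ _ (hS u) BBa.
  by exists k; rewrite /a aky.
have hAch p k := hAch_pair (p, k).
apply: (closureS _ (winning_tree_closure hAch k winF)) => _ [u _ <-].
by exists u.
Qed.

(* [Bs s] depends only on the length of [s]: a branch [f] has one node of
   each length, so through [pickle] it meets the family of every node [u]. *)
Theorem theorem2p2 (X : topologicalType) (x : X) (F : seq (set X) -> X)
  (P : set (set (set X))) :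
  winning_strategy_II x F ->
  (forall BB, P BB -> centered BB /\ (forall B, BB B -> countable B)) ->
  (forall O, nbhs x O -> exists BB, P BB /\ exists B, BB B /\ B `<=` O) ->
  exists Bs : seq nat -> set (set X),
    (forall s, P (Bs s)) /\
    forall Bsel : seq nat -> set X, (forall s, Bs s (Bsel s)) ->
    forall f : nat -> nat,
      closure (\bigcup_(n in [set: nat]) Bsel (mkseq f n)) x.
Proof.
move=> winF hP hN.
have [BB [P_BB closure_sel]] := tree_selection_closure winF hP hN.
exists (fun s => BB (odflt [::] (unpickle (size s)))).
split=> [s|Bsel hsel f]; first exact: P_BB.
have sel u : BB u (Bsel (mkseq f (pickle u))).
  by have := hsel (mkseq f (pickle u)); rewrite size_mkseq pickleK.
apply: (closureS _ (closure_sel _ sel)) => y [u _ Suy].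
exists (pickle u); [done|exact: Suy].
Qed.
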